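(* Let $G$ be a graph with a hole cover $\mathcal C$ satisfying the NC property in $G$, and let $u,w\in\mathcal C$ be adjacent in $G$. Then there is no vertex $v$ such that both $uv$ and $wv$ are newly added edges, i.e. both belong to $E(\widehat G(\mathcal C))\setminus E(G)$.
   Context: All graphs are finite and simple. A hole of $G$ is an induced cycle of length at least $4$; $\mathcal H(G)$ is the set of holes of $G$ and $\mathcal H(G,u)$ the set of holes containing $u$. A hole cover of $G$ is a nonempty $X\subseteq V(G)$ meeting every hole. A vertex $u$ satisfies the NC property in $G$ if there are no holes $H\in\mathcal H(G,u)$, $H'\in\mathcal H(G)\setminus\mathcal H(G,u)$ sharing two consecutive edges (two distinct edges with a common end vertex lying on both). A set $\mathcal C$ satisfies the NC property in $G$ if each of its vertices does and every hole contains at most one vertex of $\mathcal C$. Locally chordalizing all holes in $\mathcal H(G,u)$ by $u$ means adding all edges $uw$ with $w\ne u$ lying on some hole in $\mathcal H(G,u)$. For a hole cover $\mathcal C=\{u_1,\dots,u_k\}$ satisfying the NC property in $G$, set $G_0=G$, let $G_i$ be obtained from $G_{i-1}$ by locally chordalizing all holes in $\mathcal H(G_{i-1},u_i)$ by $u_i$, and put $\widehat G(\mathcal C)=G_k$ (this graph is chordal and independent of the ordering of $\mathcal C$). Edges of $\widehat G(\mathcal C)$ not in $G$ are called newly added edges. *)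

(* Graphs: finite vertex type T, adjacency a Prop-valued
   relation (so that graphs obtained by adding edges "lying on some hole"
   need no decidability). *)
From mathcomp Require Import all_boot.
Set Implicit Arguments. Unset Strict Implicit. Unset Printing Implicit Defensive.

Definition graph (T : Type) := T -> T -> Prop.

Definition simple_graph (T : Type) (e : graph T) : Prop :=
  (forall x y, e x y -> e y x) /\ (forall x, ~ e x x).

(* H is (the vertex set of) a hole: an induced cycle of length n >= 4,
   given by an injective cyclic listing f : 'I_n -> T of its vertices, where
   f i and f j are adjacent iff they are consecutive modulo n. *)
Definition hole (T : finType) (e : graph T) (H : {set T}) : Prop :=
  exists n (f : 'I_n -> T),
    [/\ 4 <= n, injective f, H = [set f i | i in 'I_n] &
        forall i j : 'I_n,
          e (f i) (f j) <-> (val j = (val i).+1 %% n \/ val i = (val j).+1 %% n)].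

Definition hole_cover (T : finType) (e : graph T) (X : {set T}) : Prop :=
  X != set0 /\ forall H, hole e H -> exists2 x, x \in H & x \in X.

(* NC property of a vertex u: no hole H through u and hole H' avoiding u
   share two consecutive edges xy, yz (x <> z). Since holes are induced,
   an edge ab lies on a hole H iff a, b \in H and ab is an edge. *)
Definition NC_vertex (T : finType) (e : graph T) (u : T) : Prop :=
  ~ exists H H' x y z,
      [/\ hole e H, hole e H', u \in H, u \notin H' &
      [/\ x != z, e x y, e y z,
          [&& x \in H, y \in H & z \in H] & [&& x \in H', y \in H' & z \in H']]].

Definition NC_set (T : finType) (e : graph T) (C : {set T}) : Prop :=
  (forall u, u \in C -> NC_vertex e u) /\
  (forall H, hole e H -> #|H :&: C| <= 1).

Definition local_chordalize (T : finType) (e : graph T) (u : T) : graph T :=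
  fun x y => e x y \/
    (x <> y /\
     ((x = u /\ exists H, [/\ hole e H, u \in H & y \in H]) \/
      (y = u /\ exists H, [/\ hole e H, u \in H & x \in H]))).

Fixpoint chordalize_seq (T : finType) (e : graph T) (s : seq T) : graph T :=
  match s with
  | [::] => e
  | u :: s' => chordalize_seq (local_chordalize e u) s'
  end.

From mathcomp Require Import all_boot zify.
From Stdlib Require Import Classical ClassicalEpsilon.
Set Implicit Arguments. Unset Strict Implicit. Unset Printing Implicit Defensive.

(* Chordalizing by a vertex u with the NC property adds no edge to any hole of
   the new graph: a new edge ua on a hole would give, through the two arcs of a
   hole of G containing u and a, a detour around a avoiding u, i.e. a hole
   sharing two consecutive edges with a hole through u.  Hence holes and the NC
   property survive each step, and every newly added edge joins two vertices of
   a common hole of G.  If uv and wv were both new, with holes H1 through u, v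
   and H2 through w, v, the NC property again yields an arc of H1 from v to u
   avoiding the closed neighbourhood of w and an arc of H2 from v to w avoiding
   that of u; with the edge uw they contain a hole through u and w, which meets
   C twice. *)

Section Walks.
Variable T : finType.
Variable e : graph T.

Definition adjb x y : bool := if excluded_middle_informative (e x y) then true else false.

Lemma adjbP x y : reflect (e x y) (adjb x y).
Proof. by rewrite /adjb; case: excluded_middle_informative => h; constructor. Qed.

Definition reach (S : T -> Prop) (x z : T) :=
  exists p, [/\ path adjb x p, last x p = z, S x & forall y, y \in p -> S y].

Lemma reach_refl (S : T -> Prop) x : S x -> reach S x x.
Proof. by exists [::]. Qed.

Lemma reach_step (S : T -> Prop) x y z : S x -> e x y -> reach S y z -> reach S x z.
Proof.
move=> Sx exy [p [pp lp Sy Sp]]; exists (y :: p); split=> //=.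
  by rewrite pp andbT; apply/adjbP.
by move=> t; rewrite inE => /orP [/eqP -> //|]; apply: Sp.
Qed.

Lemma reach_trans (S : T -> Prop) x y z : reach S x y -> reach S y z -> reach S x z.
Proof.
move=> [p [pp lp Sx Sp]] [q [pq lq Sy Sq]]; exists (p ++ q); split => //.
- by rewrite cat_path pp lp pq.
- by rewrite last_cat lp.
by move=> t; rewrite mem_cat => /orP []; [apply: Sp | apply: Sq].
Qed.

Lemma reach_mono (S S' : T -> Prop) x z :
  (forall t, S t -> S' t) -> reach S x z -> reach S' x z.
Proof.
move=> SS' [p [pp lp Sx Sp]]; exists p; split => //; first exact: SS'.
by move=> y /Sp /SS'.
Qed.

Definition chordless x (q : seq T) := forall i j, i.+1 < j -> j < size (x :: q) ->
  ~~ adjb (nth x (x :: q) i) (nth x (x :: q) j).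

Lemma last_take_nth (x : T) p i : i <= size p -> last x (take i p) = nth x (x :: p) i.
Proof.
elim: p x i => [|a p IH] x [|i] //= hi.
by rewrite (set_nth_default a) //; apply: IH.
Qed.

Lemma path_drop x p k : path adjb x p -> k <= size p ->
  path adjb (nth x (x :: p) k) (drop k p).
Proof.
move=> pp hk; move: pp; rewrite -{1}(cat_take_drop k p) cat_path => /andP [_].
by rewrite last_take_nth.
Qed.

Lemma last_drop (x y : T) p k : k < size p -> last y (drop k p) = last x p.
Proof. by elim: p x y k => [|a p IH] x y [|k] //= hk; apply: IH. Qed.

(* Shortcutting a chord strictly shortens the path, so induction on the length
   turns any walk into a chordless path with the same ends. *)
Lemma reach_chordless (S : T -> Prop) x z : reach S x z -> exists q,
  [/\ path adjb x q, last x q = z, uniq (x :: q), (forall y, y \in q -> S y) & chordless x q].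
Proof.
move=> [p [pp lp Sx Sp]].
have [n hs] : exists n, size p <= n by exists (size p).
elim: n p pp lp Sp hs => [|n IH] p pp lp Sp hs.
  move: hs; rewrite leqn0 => /nilP hp; subst p; exists [::]; split => //.
  by move=> i j /= h1 h2; lia.
move: lp; case: (shortenP pp) => p' pp' up' subp' lp'.
have sz : size p' <= size p by apply: uniq_leq_size => //; move: up' => /= /andP [].
have Sp' : forall y, y \in p' -> S y by move=> y /subp' /Sp.
case: (classic (chordless x p')) => hc; first by exists p'.
have [i [j [hij hj hch]]] : exists i j, [/\ i.+1 < j, j < size (x :: p') &
    adjb (nth x (x :: p') i) (nth x (x :: p') j)].
  apply: NNPP => hn; apply: hc => i j h1 h2; apply/negP => hb; apply: hn.
  by exists i, j.
have hj1 : j.-1 < size p' by move: hj => /=; lia.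
have ei : nth x (x :: p') j = nth x p' j.-1 by case: j hij {hj hch hj1}.
apply: (IH (take i p' ++ drop j.-1 p')).
- rewrite cat_path take_path //= last_take_nth; last by move: hj => /=; lia.
  rewrite (drop_nth x hj1) /= -ei hch /=.
  have -> : j.-1.+1 = j by lia.
  by apply: path_drop => //; move: hj => /=; lia.
- by rewrite last_cat (last_drop x).
- by move=> y; rewrite mem_cat => /orP [/mem_take|/mem_drop]; apply: Sp'.
- rewrite size_cat size_takel ?size_drop; last by move: hj => /=; lia.
  by move: hs sz hj => /=; lia.
Qed.

Hypothesis esym : forall x y, e x y -> e y x.

Lemma reach_sym (S : T -> Prop) x z : reach S x z -> reach S z x.
Proof.
move=> [p [pp <- Sx Sp]].
elim: p x pp Sx Sp => [|a p IH] x /= pp Sx Sp; first exact: reach_refl.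
move/andP: pp => [/adjbP exa pa].
have Sa : S a by apply: Sp; rewrite inE eqxx.
apply: reach_trans (IH a pa Sa _) _; first by move=> y hy; apply: Sp; rewrite inE hy orbT.
by apply: (reach_step Sa (esym exa)); apply: reach_refl.
Qed.

End Walks.

Lemma reach_subrel (T : finType) (e1 e2 : graph T) (S : T -> Prop) x z :
  (forall s t, S s -> S t -> e1 s t -> e2 s t) -> reach e1 S x z -> reach e2 S x z.
Proof.
move=> e12 [p [pp lp Sx Sp]]; exists p; split => //.
elim: p x pp Sx Sp {lp} => [|a p IH] x //= /andP [/adjbP ea pa] Sx Sp.
have Sa : S a by apply: Sp; rewrite inE eqxx.
rewrite IH // ?andbT; first by apply/adjbP; apply: e12.
by move=> y hy; apply: Sp; rewrite inE hy orbT.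
Qed.

Definition mod_adj n i j := j = i.+1 %% n \/ i = j.+1 %% n.

Definition cyc_adj n i j :=
  j = i.+1 \/ i = j.+1 \/ (i = 0 /\ j.+1 = n) \/ (j = 0 /\ i.+1 = n).

Lemma mod_adjE n i j : i < n -> j < n -> mod_adj n i j <-> cyc_adj n i j.
Proof.
have modS k : k < n -> k.+1 %% n = (if k.+1 == n then 0 else k.+1).
  by move=> hk; case: eqP => [->|hn]; [apply: modnn | apply: modn_small; lia].
by move=> hi hj; rewrite /mod_adj !modS //; do 2 case: eqP => ?; rewrite /cyc_adj; lia.
Qed.

Lemma mod_adj_rot n i k l : k < n -> l < n ->
  mod_adj n ((i + k) %% n) ((i + l) %% n) <-> mod_adj n k l.
Proof.
move=> hk hl.
have E a b : b < n -> (i + b) %% n = ((i + a) %% n).+1 %% n <-> b = a.+1 %% n.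
  move=> hb; rewrite -addn1 modnDml -addnA addn1 -(modn_small hb).
  by split=> /eqP h; apply/eqP; move: h; rewrite eqn_modDl // modn_mod.
by rewrite /mod_adj !E.
Qed.

Section Holes.
Variable T : finType.
Variable e : graph T.

(* The listing of [hole] with plain natural indices below [n], which makes
   rotations and arcs of a hole easy to describe. *)
Definition hole_listing (H : {set T}) n (g : nat -> T) :=
  [/\ 4 <= n, (forall k l, k < n -> l < n -> g k = g l -> k = l),
      (forall x, x \in H <-> exists2 k, k < n & x = g k) &
      (forall k l, k < n -> l < n -> (e (g k) (g l) <-> mod_adj n k l))].

Lemma hole_listing_of_hole H : hole e H -> exists n g, hole_listing H n g.
Proof.
case=> [[|n] [f [h4 finj -> hf]]] //.
exists n.+1, (fun k => f (inord k)); split => //.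
- by move=> k l hk hl /finj /(congr1 val); rewrite /= !inordK.
- move=> x; split.
    by case/imsetP => i _ ->; exists (nat_of_ord i) => //; rewrite inord_val.
  by case=> k hk ->; apply/imsetP; exists (inord k).
- by move=> k l hk hl; rewrite hf /= !inordK.
Qed.

Lemma hole_of_listing H n g : hole_listing H n g -> hole e H.
Proof.
case=> h4 ginj gmem gadj; exists n, (fun i : 'I_n => g i); split => //.
- by move=> i j /ginj h; apply: val_inj; apply: h.
- apply/setP => x; apply/idP/imsetP.
    by case/gmem => k hk ->; exists (Ordinal hk).
  by case=> i _ ->; apply: (proj2 (gmem _)); exists (nat_of_ord i).
- by move=> i j; apply: gadj.
Qed.

Lemma hole_listing_adj H n g k l : hole_listing H n g -> k < n -> l < n ->
  (e (g k) (g l) <-> cyc_adj n k l).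
Proof. by case=> _ _ _ gadj hk hl; rewrite gadj // mod_adjE. Qed.

Lemma hole_listing_rot H n g i : hole_listing H n g -> i < n ->
  hole_listing H n (fun k => g ((i + k) %% n)).
Proof.
case=> h4 ginj gmem gadj hi; have n0 : 0 < n by lia.
split => //.
- move=> k l hk hl /ginj; rewrite !ltn_pmod // => /(_ isT isT) /eqP.
  by rewrite eqn_modDl !modn_small // => /eqP.
- move=> x; rewrite gmem; split; case=> k hk ->.
    exists ((n - i + k) %% n); first by rewrite ltn_pmod.
    rewrite modnDmr addnA subnKC; last by lia.
    by rewrite modnDl modn_small.
  by exists ((i + k) %% n) => //; rewrite ltn_pmod.
- by move=> k l hk hl; rewrite gadj ?ltn_pmod //; apply: mod_adj_rot.
Qed.

Definition arc (g : nat -> T) a c (s : T) := exists2 k, a <= k <= c & s = g k.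

Lemma reach_arc_from H n g a d c : hole_listing H n g -> a + d <= c -> c < n ->
  reach e (arc g a c) (g a) (g (a + d)).
Proof.
move=> hL; elim: d => [|d IH] h1 h2.
  by rewrite addn0; apply: reach_refl; exists a => //; lia.
apply: reach_trans (IH _ h2) _; first by lia.
rewrite addnS; apply: (reach_step (y := g (a + d).+1)).
- by exists (a + d) => //; lia.
- by apply/(hole_listing_adj hL); try rewrite /cyc_adj; lia.
- by apply: reach_refl; exists (a + d).+1 => //; lia.
Qed.

Hypothesis esym : forall x y, e x y -> e y x.
Hypothesis eirr : forall x, ~ e x x.

Lemma reach_arc H n g a c k l : hole_listing H n g -> a <= k <= c -> a <= l <= c -> c < n ->
  reach e (arc g a c) (g k) (g l).
Proof.
move=> hL hk hl hc.
have R m : a <= m <= c -> reach e (arc g a c) (g a) (g m).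
  move=> hm; have -> : m = a + (m - a) by lia.
  by apply: (reach_arc_from hL); lia.
by apply: reach_trans (R l hl); apply: reach_sym => //; apply: R.
Qed.

Lemma hole_neighbours H p : hole e H -> p \in H -> exists p1 p2,
  [/\ p1 \in H /\ p2 \in H, e p p1 /\ e p p2, p1 <> p2 /\ ~ e p1 p2,
      (forall z, z \in H -> e p z -> z = p1 \/ z = p2) &
      reach e (fun x => x \in H /\ x <> p) p1 p2].
Proof.
move=> /hole_listing_of_hole [n [g hL]] pH.
have [h4 _ gmem _] := hL; have [i hi ->] := proj1 (gmem p) pH.
have hR := hole_listing_rot hL hi; set g' := fun k => _ in hR.
have -> : g i = g' 0 by rewrite /g' addn0 modn_small.
have [_ ginj gm _] := hR.
have A k l : k < n -> l < n -> e (g' k) (g' l) <-> cyc_adj n k l.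
  exact: hole_listing_adj hR.
rewrite /cyc_adj in A; exists (g' 1), (g' n.-1); split.
- by split; apply/gm; [exists 1 | exists n.-1] => //; lia.
- by split; apply/A; lia.
- by split; [move/ginj | move/A]; lia.
- move=> z /gm [k hk ->] /A h.
  have : k = 1 \/ k = n.-1 by lia.
  by case=> ->; [left | right].
- have -> : n.-1 = 1 + (n - 2) by lia.
  apply: reach_mono (reach_arc_from (a := 1) (d := n - 2) (c := n.-1) hR _ _); try lia.
  move=> t [k hk ->]; split; first by apply/gm; exists k => //; lia.
  by move/ginj; lia.
Qed.

Lemma hole_notin_single_nbr H a c : hole e H ->
  (forall p, p \in H -> e a p -> p = c) -> a \notin H.
Proof.
move=> hH nbr; apply/negP => aH.
have [p1 [p2 [[p1H p2H] [ep1 ep2] [p12 _] _ _]]] := hole_neighbours hH aH.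
by apply: p12; rewrite (nbr p1) // (nbr p2).
Qed.

Lemma hole_other_neighbour H p a : hole e H -> p \in H -> a \in H -> e p a -> exists b,
  [/\ b \in H, e p b, b <> a, ~ e a b &
      reach e (fun t => t \in H /\ t <> p) a b /\
      forall z, z \in H -> e p z -> z = a \/ z = b].
Proof.
move=> hH pH aH epa.
have [p1 [p2 [[p1H p2H] [ep1 ep2] [p12 np12] hp rp]]] := hole_neighbours hH pH.
case: (hp a aH epa) => E; subst a.
- by exists p2; split => //; apply: nesym.
- exists p1; split => //; first by move/esym.
  by split; [apply: reach_sym | move=> z zH /(hp z zH) []; auto].
Qed.

(* [A] is one of the two open arcs of the hole [H] between the non-adjacent
   vertices [p] and [q]; its ends are [p1] (next to [p]) and [q1] (next to [q]). *)
Record side (H : {set T}) (p q p1 q1 : T) (A : T -> Prop) : Prop := Side {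
  side_in : forall s, A s -> [/\ s \in H, s <> p & s <> q];
  side_p1 : A p1;
  side_q1 : A q1;
  side_adj_p : e p p1;
  side_adj_q : e q q1;
  side_reach : forall s t, A s -> A t -> reach e A s t;
  side_nbr_p : forall s, A s -> e p s -> s = p1;
  side_nbr_q : forall s, A s -> e q s -> s = q1 }.

Lemma side_arc H n g a c d i1 j1 : hole_listing H n g -> c < n -> d < n ->
  a <= i1 <= c -> a <= j1 <= c -> ~ (a <= 0 <= c) -> ~ (a <= d <= c) ->
  cyc_adj n 0 i1 -> cyc_adj n d j1 ->
  (forall k, a <= k <= c -> cyc_adj n 0 k -> k = i1) ->
  (forall k, a <= k <= c -> cyc_adj n d k -> k = j1) ->
  side H (g 0) (g d) (g i1) (g j1) (arc g a c).
Proof.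
move=> hL hc hd hi hj h0 hdd a0 ad n0 nd; have [_ ginj gm _] := hL.
split.
- move=> s [k hk ->].
  by split; [apply/gm; exists k => //; lia | move/ginj; lia | move/ginj; lia].
- by exists i1.
- by exists j1.
- by apply/(hole_listing_adj hL) => //; lia.
- by apply/(hole_listing_adj hL) => //; lia.
- by move=> s t [k hk ->] [l hl ->]; apply: reach_arc hL _ _ _.
- by move=> s [k hk ->] /(hole_listing_adj hL) h; rewrite (n0 k hk) //; apply: h; lia.
- by move=> s [k hk ->] /(hole_listing_adj hL) h; rewrite (nd k hk) //; apply: h; lia.
Qed.

Lemma hole_sides H p q : hole e H -> p \in H -> q \in H -> p <> q -> ~ e p q ->
  exists A1 A2 p1 p2 q1 q2,
    [/\ side H p q p1 q1 A1, side H p q p2 q2 A2, p1 <> p2 & ~ e p1 p2].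
Proof.
move=> /hole_listing_of_hole [n [g hL]] pH qH pq npq.
have [_ _ gmem _] := hL; have [i hi ei] := proj1 (gmem p) pH.
have hR := hole_listing_rot hL hi; set g' := fun k => _ in hR.
have ep : p = g' 0 by rewrite ei /g' addn0 modn_small.
clearbody g'; clear ei.
have [_ ginj gm _] := hR.
have [d hd eq] := proj1 (gm q) qH; subst p q.
have d0 : d <> 0 by move=> h; apply: pq; rewrite h.
have nd : ~ cyc_adj n 0 d by move=> h; apply: npq; apply/(hole_listing_adj hR) => //; lia.
exists (arc g' 1 d.-1), (arc g' d.+1 n.-1), (g' 1), (g' n.-1), (g' d.-1), (g' d.+1).
rewrite /cyc_adj in nd; split.
- by apply: (side_arc hR); rewrite /cyc_adj; try lia; move=> k hk; lia.
- by apply: (side_arc hR); rewrite /cyc_adj; try lia; move=> k hk; lia.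
- by move/ginj; lia.
- by move/(hole_listing_adj hR); rewrite /cyc_adj; lia.
Qed.

Lemma hole_listing_apex y x q :
  path (adjb e) x q -> uniq (y :: x :: q) -> chordless e x q -> 1 < size q ->
  (forall k, k <= size q -> e y (nth y (x :: q) k) <-> k = 0 \/ k = size q) ->
  hole_listing [set t | t \in y :: x :: q] (size q).+2 (nth y (y :: x :: q)).
Proof.
move=> pq ul cq q2 ey.
have F1 k : k < size q -> e (nth y (x :: q) k) (nth y (x :: q) k.+1).
  by move=> hk; move/(pathP y): pq => /(_ k hk) /adjbP.
have F2 i j : i.+1 < j -> j <= size q -> ~ e (nth y (x :: q) i) (nth y (x :: q) j).
  move=> hij hj; have hi : i < size (x :: q) by rewrite /=; lia.
  have {}hj : j < size (x :: q) by [].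
  move: (cq i j hij hj); rewrite -(set_nth_default y x hi) -(set_nth_default y x hj).
  by move=> /negP h /adjbP.
split.
- by lia.
- by move=> i j hi hj /eqP; rewrite nth_uniq // => /eqP.
- move=> t; rewrite inE; split; first by case/(nthP y) => k hk <-; exists k.
  by case=> k hk ->; apply: mem_nth.
- move=> i j hi hj; rewrite mod_adjE //.
  case: i hi => [|i] hi; case: j hj => [|j] hj /=; rewrite /cyc_adj.
  + by split; [move/eirr | lia].
  + by rewrite ey; lia.
  + by split; [move/esym; rewrite ey; lia | move=> h; apply/esym/ey; lia].
  + split.
      move=> h.
      have : ~ i.+1 < j by move=> hh; apply: (F2 i j hh _ h); lia.
      have : ~ j.+1 < i by move=> hh; apply: (F2 j i hh _ (esym h)); lia.
      have : i <> j by move=> hh; rewrite hh in h; apply: eirr h.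
      lia.
    move=> h; have [E|E] : j = i.+1 \/ i = j.+1 by lia.
      by subst j; apply: F1; lia.
    by subst i; apply: esym; apply: F1; lia.
Qed.

(* [y] closes a hole with a shortest, hence chordless, path from [x] to [z]. *)
Lemma hole_of_reach (S : T -> Prop) x y z : reach e S x z -> ~ S y -> e y x -> e y z ->
  ~ e x z -> x <> z -> (forall s, S s -> e y s -> s = x \/ s = z) ->
  exists H, [/\ hole e H, x \in H, y \in H, z \in H & forall h, h \in H -> h = y \/ S h].
Proof.
move=> hr nSy eyx eyz nxz xz hS.
have [_ [_ _ Sx _]] := hr.
have [q [pq lq uq Sq cq]] := reach_chordless hr.
have Sr t : t \in x :: q -> S t by rewrite inE => /orP [/eqP -> //|]; apply: Sq.
have yr : y \notin x :: q by apply/negP => /Sr.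
have q2 : 1 < size q.
  move: pq lq; case: q {uq Sq cq Sr yr} => [|a [|b q']] //=.
  by rewrite andbT => /adjbP exa ea; case: nxz; rewrite -ea.
have zq : nth y (x :: q) (size q) = z by rewrite -lq (last_nth y).
have hL : hole_listing [set t | t \in y :: x :: q] (size q).+2 (nth y (y :: x :: q)).
  apply: hole_listing_apex => //; first by rewrite /= yr.
  move=> k hk; split; last by case=> ->; rewrite ?zq.
  have hk' : k < size (x :: q) by [].
  move=> /(hS _ (Sr _ (mem_nth y hk'))) [E|E].
    by left; apply/eqP; rewrite -(nth_uniq y hk' _ uq) ?E.
  by right; apply/eqP; rewrite -(nth_uniq y hk' _ uq) ?E ?zq.
exists [set t | t \in y :: x :: q]; split.
- exact: hole_of_listing hL.
- by rewrite inE !inE eqxx orbT.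
- by rewrite inE inE eqxx.
- by rewrite inE inE -zq mem_nth ?orbT.
- by move=> h; rewrite inE inE => /orP [/eqP ->|/Sr]; [left | right].
Qed.

End Holes.

Section NC.
Variable T : finType.
Variable e : graph T.
Hypothesis esym : forall x y, e x y -> e y x.
Hypothesis eirr : forall x, ~ e x x.

Definition on_hole u x := exists H, [/\ hole e H, u \in H & x \in H].

(* A detour around [p] avoiding [u] closes, together with [p], a hole through
   two consecutive edges [p1 p] and [p p2] of [H] but not through [u]. *)
Lemma NC_no_detour u H p p1 p2 (S : T -> Prop) : NC_vertex e u -> hole e H -> u \in H ->
  p \in H -> p1 \in H -> p2 \in H -> p <> u -> e p p1 -> e p p2 -> p1 <> p2 -> ~ e p1 p2 ->
  reach e S p1 p2 -> ~ S p -> ~ S u -> (forall s, S s -> e p s -> s = p1 \/ s = p2) -> False.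
Proof.
move=> NCu hH uH pH p1H p2H pu ep1 ep2 p12 np12 hr nSp nSu hS.
have [H' [hH' p1H' pH' p2H' H'S]] := hole_of_reach esym eirr hr nSp ep1 ep2 np12 p12 hS.
apply: NCu; exists H, H', p1, p, p2; split => //.
  by apply/negP; case/H'S => [E|]; [apply: pu | apply: nSu].
by split => //; [apply/eqP | apply: esym | rewrite p1H pH p2H | rewrite p1H' pH' p2H'].
Qed.

Lemma NC_side_avoiding u H p y : NC_vertex e u -> hole e H -> u \in H -> p \in H ->
  p <> u -> ~ e p u -> y <> p -> y <> u -> ~ e p y ->
  exists A p1 u1, side e H p u p1 u1 A /\ forall s, A s -> s <> y /\ ~ e y s.
Proof.
move=> NCu hH uH pH pu npu yp yu npy.
have [A1 [A2 [p1 [p2 [u1 [u2 [s1 s2 p12 np12]]]]]]] := hole_sides esym hH pH uH pu npu.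
have meet (B : T -> Prop) :
    (forall s, B s -> s <> y /\ ~ e y s) \/ exists2 t, B t & t = y \/ e y t.
  case: (classic (exists2 t, B t & t = y \/ e y t)) => [|nB]; [by right | left => s Bs].
  by split=> [sy|eys]; apply: nB; exists s; auto.
case: (meet A1) => [c1|[t1 A1t1 yt1]]; first by exists A1, p1, u1.
case: (meet A2) => [c2|[t2 A2t2 yt2]]; first by exists A2, p2, u2.
exfalso; pose S t := A1 t \/ A2 t \/ t = y.
have to_y t : S t -> t = y \/ e y t -> reach e S t y.
  move=> St [->|eyt]; first by apply: reach_refl; right; right.
  by apply: (reach_step St (esym eyt)); apply: reach_refl; right; right.
have [p1H _ _] := side_in s1 (side_p1 s1); have [p2H _ _] := side_in s2 (side_p1 s2).
apply: (NC_no_detour (S := S) NCu hH uH pH p1H p2H pu (side_adj_p s1) (side_adj_p s2) p12 np12).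
- apply: (reach_trans (y := y)).
    apply: reach_trans (to_y _ (or_introl A1t1) yt1).
    by apply: reach_mono (side_reach s1 (side_p1 s1) A1t1) => t; left.
  apply: reach_sym => //; apply: reach_trans (to_y _ (or_intror (or_introl A2t2)) yt2).
  by apply: reach_mono (side_reach s2 (side_p1 s2) A2t2) => t; right; left.
- by case=> [/(side_in s1) [] | [/(side_in s2) [] | E]] //; apply: yp.
- by case=> [/(side_in s1) [] | [/(side_in s2) [] | E]] //; apply: yu.
- move=> s [/(side_nbr_p s1) h | [/(side_nbr_p s2) h | ->]] eps.
  + by left; apply: h.
  + by right; apply: h.
  + by case: npy.
Qed.

Definition bridge u a b w (X : T -> Prop) :=
  [/\ X b, X w, reach e X b w, e u w &
      forall t, X t -> [/\ t <> u, t <> a, ~ e a t & (e u t -> t = w)]].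

Lemma bridge_exists u a b : NC_vertex e u -> a <> u -> b <> u -> b <> a -> ~ e a b ->
  e u b \/ on_hole u b /\ ~ e u b -> exists X w, bridge u a b w X.
Proof.
move=> NCu au bu ba nab [eub|[[Hb [hHb uHb bHb]] nub]].
  by exists (fun t => t = b), b; split => //; [apply: reach_refl | move=> t ->].
have [B [b1 [w1 [sd hB]]]] := NC_side_avoiding NCu hHb uHb bHb bu
  (fun h => nub (esym h)) (nesym ba) au (fun h => nab (esym h)).
exists (fun t => t = b \/ B t), w1; split.
- by left.
- by right; apply: side_q1 sd.
- apply: (reach_step (y := b1)); [by left | exact: side_adj_p sd |].
  by apply: reach_mono (side_reach sd (side_p1 sd) (side_q1 sd)) => t; right.
- exact: side_adj_q sd.
move=> t [->|Bt]; first by split => // /nub.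
have [_ _ tu] := side_in sd Bt; have [ta nat] := hB t Bt.
by split => // /(side_nbr_q sd Bt).
Qed.

Lemma side_bridge_hole u a b w X (W : T -> Prop) H A ai ui :
  side e H a u ai ui A -> bridge u a b w X -> ~ e u a -> a <> u -> reach e W a b ->
  (forall z, W z -> z = a \/ z = b \/ (z <> u /\ ~ e u z /\ ~ on_hole u z)) ->
  ui <> w -> ~ e ui w -> exists Hs, [/\ hole e Hs, ui \in Hs, u \in Hs, w \in Hs &
    forall h, h \in Hs -> h = u \/ A h \/ W h \/ X h].
Proof.
move=> sd [Xb Xw rbw euw hX] nua au rab hW uiw nuiw.
have [bu _ _ _] := hX b Xb.
pose S t := A t \/ W t \/ X t.
have hr : reach e S ui w.
  apply: (reach_trans (y := ai)).
    apply: reach_sym => //.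
    by apply: reach_mono (side_reach sd (side_p1 sd) (side_q1 sd)) => t; left.
  apply: (reach_step (or_introl (side_p1 sd)) (esym (side_adj_p sd))).
  apply: (reach_trans (y := b)); first by apply: reach_mono rab => t; right; left.
  by apply: reach_mono rbw => t; right; right.
have nSu : ~ S u.
  case=> [/(side_in sd) [] // | [/hW [E|[E|[]]] // | /hX []] //].
  - by apply: au; rewrite E.
  - by apply: bu; rewrite E.
have hS s : S s -> e u s -> s = ui \/ s = w.
  case=> [As|[Ws|Xs]] eus.
  - by left; apply: (side_nbr_q sd As eus).
  - case: (hW s Ws) => [E|[E|[_ [nus _]]]]; last by case: nus.
      by case: nua; rewrite -E.
    by subst s; right; have [_ _ _ h] := hX b Xb; apply: h.
  - by right; have [_ _ _ h] := hX s Xs; apply: h.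
have [Hs [hHs uiHs uHs wHs HsS]] := hole_of_reach esym eirr hr nSu (side_adj_q sd) euw nuiw uiw hS.
by exists Hs; split.
Qed.

(* The hole given by [side_bridge_hole] avoids the inner vertices of the walk
   (they share no hole with [u]) and [a] (it would have a single neighbour on
   it), so its arc from [ui] to [w] stays in [A] and [X]. *)
Lemma side_reach_bridge u a b w X (W : T -> Prop) H A ai ui :
  side e H a u ai ui A -> bridge u a b w X -> ~ e u a -> a <> u -> reach e W a b ->
  (forall z, W z -> z = a \/ z = b \/ (z <> u /\ ~ e u z /\ ~ on_hole u z)) ->
  reach e (fun t => A t \/ X t) ai w.
Proof.
move=> sd br nua au rab hW; have [Xb Xw _ euw hX] := br.
have [_ _ nab _] := hX b Xb.
apply: (reach_trans (y := ui)).
  by apply: reach_mono (side_reach sd (side_p1 sd) (side_q1 sd)) => t; left.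
have [[->|euiw]|nuiw] : (ui = w \/ e ui w) \/ ~ (ui = w \/ e ui w) by apply: classic.
- by apply: reach_refl; right.
- by apply: (reach_step (or_introl (side_q1 sd)) euiw); apply: reach_refl; right.
have [Hs [hHs uiHs uHs wHs HsS]] := side_bridge_hole sd br nua au rab hW
  (fun h => nuiw (or_introl h)) (fun h => nuiw (or_intror h)).
have WHs h : h \in Hs -> W h -> h = a \/ h = b.
  by move=> hH /hW [|[|[_ [_ []]]]]; [left | right | exists Hs].
have aHs : a \notin Hs.
  apply: (hole_notin_single_nbr hHs (c := ai)) => p pH eap.
  case: (HsS p pH) => [E|[Ap|[Wp|Xp]]].
  - by case: nua; apply: esym; rewrite -E.
  - exact: (side_nbr_p sd Ap eap).
  - case: (WHs p pH Wp) => E; first by rewrite E in eap; case: (eirr eap).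
    by case: nab; rewrite -E.
  - by have [_ _ h _] := hX p Xp; case: (h eap).
have [c [_ _ wc _ [rc Hc]]] := hole_other_neighbour esym hHs uHs uiHs (side_adj_q sd).
have -> : w = c by case: (Hc w wHs euw) => // E; case: nuiw; left.
apply: reach_mono rc => t [tH tu].
case: (HsS t tH) => [//|[At|[Wt|Xt]]]; [by left | | by right].
case: (WHs t tH Wt) => E; first by move: aHs; rewrite -E tH.
by right; rewrite E.
Qed.

(* A new edge [ua] cannot lie on a cycle [u a ... b u] whose inner walk avoids
   every vertex sharing a hole with [u]. *)
Lemma NC_new_edge_no_cycle u a b (W : T -> Prop) : NC_vertex e u -> on_hole u a ->
  ~ e u a -> a <> u -> b <> u -> ~ e a b -> b <> a -> e u b \/ on_hole u b /\ ~ e u b ->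
  reach e W a b ->
  (forall z, W z -> z = a \/ z = b \/ (z <> u /\ ~ e u z /\ ~ on_hole u z)) -> False.
Proof.
move=> NCu [H [hH uH aH]] nua au bu nab ba hb rab hW.
have [A1 [A2 [a1 [a2 [u1 [u2 [s1 s2 a12 na12]]]]]]] :=
  hole_sides esym hH aH uH au (fun h => nua (esym h)).
have [X [w br]] := bridge_exists NCu au bu ba nab hb.
have r1 := side_reach_bridge s1 br nua au rab hW.
have r2 := side_reach_bridge s2 br nua au rab hW.
have [_ _ _ _ hX] := br.
pose S t := A1 t \/ A2 t \/ X t.
have [a1H _ _] := side_in s1 (side_p1 s1); have [a2H _ _] := side_in s2 (side_p1 s2).
apply: (NC_no_detour (S := S) NCu hH uH aH a1H a2H au (side_adj_p s1) (side_adj_p s2) a12 na12).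
- apply: (reach_trans (y := w)); first by apply: reach_mono r1 => t []; rewrite /S; auto.
  by apply: reach_sym => //; apply: reach_mono r2 => t []; rewrite /S; auto.
- by case=> [/(side_in s1) [] | [/(side_in s2) [] | /hX []]].
- by case=> [/(side_in s1) [] | [/(side_in s2) [] | /hX []]].
- move=> s [/(side_nbr_p s1) h | [/(side_nbr_p s2) h | /hX [_ _ h _]]] eas.
  + by left; apply: h.
  + by right; apply: h.
  + by case: h.
Qed.

End NC.

Lemma local_chordalize_simple (T : finType) (e : graph T) u :
  simple_graph e -> simple_graph (local_chordalize e u).
Proof.
case=> esym eirr; split.
  move=> x y [h|[xy [[xu hh]|[yu hh]]]]; [left; exact: esym | right | right].
  - by split; [move=> E; apply: xy; rewrite E | right].
  - by split; [move=> E; apply: xy; rewrite E | left].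
by move=> x [h|[]]; [exact: eirr h |].
Qed.

Lemma hole_eq_on (T : finType) (e1 e2 : graph T) H : hole e1 H ->
  (forall x y, x \in H -> y \in H -> (e1 x y <-> e2 x y)) -> hole e2 H.
Proof.
case=> n [f [h4 fi EH hf]] e12; exists n, f; split => // i j.
by rewrite -e12 ?hf // EH; apply/imsetP; [exists i | exists j].
Qed.

Lemma local_chordalize_hole_new_nbr (T : finType) (e : graph T) u H a :
  simple_graph e -> NC_vertex e u -> hole (local_chordalize e u) H ->
  u \in H -> a \in H -> a <> u -> on_hole e u a -> ~ e u a -> False.
Proof.
move=> se NCu hH uH aH au oa nua; have [esym eirr] := se.
have [esym' eirr'] := local_chordalize_simple u se.
set e' := local_chordalize e u in hH esym' eirr' *.
have e'ua : e' u a by right; split; [exact: nesym | left].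
have [b [bH e'ub ba ne'ab [rab Hb]]] := hole_other_neighbour esym' hH uH aH e'ua.
have bu : b <> u by move=> E; rewrite E in e'ub; apply: eirr' e'ub.
apply: (NC_new_edge_no_cycle esym eirr (W := fun x => x \in H /\ x <> u) NCu oa nua au bu _ ba).
- by move=> h; apply: ne'ab; left.
- case: e'ub => [h|[_ [[_ ob]|[E _]]]]; [by left | | by case: bu].
  by case: (classic (e u b)) => h; [left | right].
- apply: reach_subrel rab => s t [_ su] [_ tu].
  by case=> [//|[_ [[E _]|[E _]]]]; [case: su | case: tu].
- move=> z [zH zu].
  case: (classic (e' u z)) => h; first by case: (Hb z zH h); auto.
  right; right; split => //; split; first by move=> h'; apply: h; left.
  by move=> oz; apply: h; right; split; [move=> E; apply: zu; rewrite E | left].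
Qed.

Lemma local_chordalize_hole_adj (T : finType) (e : graph T) u H x y :
  simple_graph e -> NC_vertex e u -> hole (local_chordalize e u) H ->
  x \in H -> y \in H -> local_chordalize e u x y <-> e x y.
Proof.
move=> se NCu hH xH yH; split; last by left.
have [esym _] := se.
case=> [//|[xy [[xu ox]|[yu oy]]]]; apply: NNPP => nxy.
- by subst x; apply: (local_chordalize_hole_new_nbr se NCu hH xH yH (nesym xy) ox nxy).
- subst y; apply: (local_chordalize_hole_new_nbr se NCu hH yH xH xy oy).
  by move/esym.
Qed.

Definition hole_conservative (T : finType) (e0 e : graph T) :=
  [/\ simple_graph e, (forall x y, e0 x y -> e x y),
      (forall x y, e x y -> e0 x y \/ on_hole e0 x y) &
      (forall H, hole e H -> forall x y, x \in H -> y \in H -> (e x y <-> e0 x y))].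

Lemma hole_conservative_refl (T : finType) (e : graph T) :
  simple_graph e -> hole_conservative e e.
Proof. by move=> se; split => // x y; left. Qed.

Lemma hole_conservative_NC (T : finType) (e0 e : graph T) c :
  hole_conservative e0 e -> NC_vertex e0 c -> NC_vertex e c.
Proof.
case=> _ _ _ ag NC0 [H [H' [x [y [z [hH hH' cH cH' [xz exy eyz inH inH']]]]]]].
apply: NC0; exists H, H', x, y, z; move: inH => /and3P [xH yH zH].
split => //; [exact: hole_eq_on (ag H hH) | exact: hole_eq_on (ag H' hH') |].
by split => //; [rewrite -(ag H hH) | rewrite -(ag H hH) | rewrite xH yH zH].
Qed.

Lemma hole_conservative_local_chordalize (T : finType) (e0 e : graph T) c :
  hole_conservative e0 e -> NC_vertex e0 c -> hole_conservative e0 (local_chordalize e c).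
Proof.
move=> he NC0; have NCe := hole_conservative_NC he NC0.
case: he => se sub new ag; split.
- exact: local_chordalize_simple.
- by move=> x y /sub; left.
- move=> x y [/new //|[xy [[xc [H [hH cH yH]]]|[yc [H [hH cH xH]]]]]].
  + by right; exists H; split; [exact: hole_eq_on (ag H hH) | rewrite xc |].
  + by right; exists H; split; [exact: hole_eq_on (ag H hH) | | rewrite yc].
- move=> H hH x y xH yH.
  have ec := local_chordalize_hole_adj se NCe hH.
  exact: iff_trans (ec x y xH yH) (ag H (hole_eq_on hH ec) x y xH yH).
Qed.

Lemma hole_conservative_chordalize_seq (T : finType) (e0 e : graph T) s :
  hole_conservative e0 e -> (forall c, c \in s -> NC_vertex e0 c) ->
  hole_conservative e0 (chordalize_seq e s).
Proof.
elim: s e => [|c s IH] e he NCs //=.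
apply: IH; first by apply: hole_conservative_local_chordalize he (NCs c _); rewrite inE eqxx.
by move=> d ds; apply: NCs; rewrite inE ds orbT.
Qed.

Lemma NC_adjacent_no_common_on_hole (T : finType) (e : graph T) u w v :
  simple_graph e -> NC_vertex e u -> NC_vertex e w ->
  (forall H, hole e H -> u \in H -> w \in H -> False) -> e u w ->
  on_hole e u v -> on_hole e w v -> ~ e u v -> ~ e w v -> v <> u -> v <> w -> False.
Proof.
move=> [esym eirr] NCu NCw noUW euw [H1 [hH1 uH1 vH1]] [H2 [hH2 wH2 vH2]] nuv nwv vu vw.
have wu : w <> u by move=> E; rewrite E in euw; apply: eirr euw.
have [A [vd [ud [sA hA]]]] := NC_side_avoiding esym eirr NCu hH1 uH1 vH1 vu
  (fun h => nuv (esym _ _ h)) (nesym vw) wu (fun h => nwv (esym _ _ h)).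
have [B [vd' [wd [sB hB]]]] := NC_side_avoiding esym eirr NCw hH2 wH2 vH2 vw
  (fun h => nwv (esym _ _ h)) (nesym vu) (nesym wu) (fun h => nuv (esym _ _ h)).
pose S t := B t \/ t = v \/ A t \/ t = w.
have hr : reach e S w ud.
  apply: (reach_step (y := wd)); [by right; right; right | exact: side_adj_q sB |].
  apply: (reach_trans (y := vd')).
    by apply: reach_mono (side_reach sB (side_q1 sB) (side_p1 sB)) => t; left.
  apply: (reach_step (y := v)); [by left; apply: side_p1 sB | exact: esym _ _ (side_adj_p sB) |].
  apply: (reach_step (y := vd)); [by right; left | exact: side_adj_p sA |].
  by apply: reach_mono (side_reach sA (side_p1 sA) (side_q1 sA)) => t; right; right; left.
have nSu : ~ S u.
  by case=> [/hB [] | [E | [/(side_in sA) [] | E]]] //; [apply: vu | apply: wu].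
have hS s : S s -> e u s -> s = w \/ s = ud.
  case=> [/hB [_ //] | [-> // | [As | ->]]] eus; last by left.
  by right; apply: (side_nbr_q sA As eus).
have [wud nwud] := hA ud (side_q1 sA).
have [Hs [hHs wHs uHs _ _]] := hole_of_reach esym eirr hr nSu euw (side_adj_q sA) nwud
  (nesym wud) hS.
exact: noUW hHs uHs wHs.
Qed.

Theorem lemma2p5 (T : finType) (e : graph T) (C : {set T}) (u w : T)
  (s : seq T) :
  simple_graph e ->
  hole_cover e C ->
  NC_set e C ->
  u \in C -> w \in C -> e u w ->
  uniq s -> [set x in s] = C ->
  ~ exists v : T,
      (chordalize_seq e s u v /\ ~ e u v) /\
      (chordalize_seq e s w v /\ ~ e w v).
Proof.
move=> se _ [NCC holeC] uC wC euw _ sC [v [[cuv nuv] [cwv nwv]]].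
have NCs c : c \in s -> NC_vertex e c by move=> cs; apply: NCC; rewrite -sC inE.
have [[_ irr] _ new _] := hole_conservative_chordalize_seq (hole_conservative_refl se) NCs.
have noUW H : hole e H -> u \in H -> w \in H -> False.
  move=> hH uH wH; suff : 1 < #|H :&: C| by have := holeC H hH; lia.
  apply/card_gt1P; exists u, w; rewrite !inE uH uC wH wC; split => //.
  by apply/eqP => E; rewrite E in euw; case: se => _ /(_ w).
case: (new u v cuv) => [//|ouv]; case: (new w v cwv) => [//|owv].
apply: (NC_adjacent_no_common_on_hole se (NCC u uC) (NCC w wC) noUW euw ouv owv nuv nwv).
- by move=> E; rewrite E in cuv; apply: irr cuv.
- by move=> E; rewrite E in cwv; apply: irr cwv.
Qed.
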